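(* Let $A\in\mathbb{R}^{n\times n}$, $B\in\mathbb{R}^{n\times m}$, $C\in\mathbb{R}^{p\times n}$, $\bar T>0$. Let $\hat A, \hat B, \hat C$ be reduced matrices computed by the time-limited IRKA-type algorithm, in the following sense: $\hat A=S^{-1}DS$ with $D=\operatorname{diag}(\lambda_1,\dots,\lambda_r)$, $\tilde B=S\hat B$, $\tilde C=\hat CS^{-1}$, and there are $V,W\in\mathbb{C}^{n\times r}$ with $W^TV$ invertible such that $$-VD-AV=B\tilde B^T-e^{A\bar T}B\tilde B^Te^{D\bar T},\qquad -WD-A^TW=C^T\tilde C-e^{A^T\bar T}C^T\tilde Ce^{D\bar T},$$ $$\hat A=(W^TV)^{-1}W^TAV,\qquad \hat B=(W^TV)^{-1}W^TB,\qquad \hat C=CV.$$ Assume all matrix inverses below exist. Set $\operatorname{Pr}:=V(W^TV)^{-1}W^T$. Then: (a) $L_c-R_c=E_c$, where $L_c:=(I\otimes \hat C) \left[(I\otimes \hat A)+(D\otimes I)\right]^{-1}(e^{D \bar T}\tilde B \otimes e^{\hat A \bar T}\hat B -\tilde B \otimes \hat B) \operatorname{vec}(I)$, $R_c:=(I\otimes C) \left[(I\otimes A)+(D\otimes I)\right]^{-1} (e^{D \bar T}\tilde B \otimes e^{ A \bar T} B -\tilde B \otimes B) \operatorname{vec}(I)$ and $$E_c = (I\otimes \hat C) \left[(I\otimes \hat A)+(D\otimes I)\right]^{-1}\big(e^{D \bar T}\tilde B \otimes (W^TV)^{-1}W^T(e^{A \operatorname{Pr}\bar T}-e^{A \bar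 T}) B \big) \operatorname{vec}(I).$$ (b) $L_b-R_b=E_b$, where $L_b:=(\hat B^T\otimes I) \left[(I\otimes D)+(\hat A^T\otimes I)\right]^{-1}(e^{\hat A^T \bar T}\hat C^T \otimes e^{D \bar T}\tilde C^T-\hat C^T \otimes \tilde C^T)\operatorname{vec}(I)$, $R_b:=(B^T\otimes I) \left[(I\otimes D)+(A^T\otimes I)\right]^{-1}(e^{A^T \bar T} C^T \otimes e^{D \bar T}\tilde C^T-C^T \otimes \tilde C^T)\operatorname{vec}(I)$ and $$E_b = (\hat B^T\otimes I) \left[(I\otimes D)+(\hat A^T\otimes I)\right]^{-1}\big(V^T(e^{ A^T \operatorname{Pr}^T \bar T}-e^{ A^T \bar T})C^T \otimes e^{D \bar T}\tilde C^T\big)\operatorname{vec}(I).$$ (c) For all $i=1,\ldots,r$, $L_\lambda^i-R_\lambda^i=E_{\lambda,1}^i+E_{\lambda,2}^i$, where $$L_\lambda^i:=\operatorname{vec}^T(I) (\hat C \otimes \tilde C) \hat K_2^{-1} (I\otimes e_i e_i^T)\Big( \hat K_2^{-1} (e^{\hat A \bar T}\hat B \otimes e^{D \bar T}\tilde B -\hat B \otimes \tilde B)- (\bar Te^{\hat A \bar T}\hat B \otimes e^{D \bar T}\tilde B) \Big)\operatorname{vec}(I),$$ $$R_\lambda^i:=\operatorname{vec}^T(I) ( C \otimes \tilde C) K_2^{-1} (I\otimes e_i e_i^T)\Big( K_2^{-1} (e^{A \bar T} B \otimes e^{D \bar T}\tilde B -B \otimes \tilde B)-(\bar Te^{A \bar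 T}B \otimes e^{D \bar T}\tilde B)\Big) \operatorname{vec}(I),$$ $$E_{\lambda, 1}^i=\operatorname{vec}^T(I) (\hat C \otimes \tilde C) \hat K_2^{-1} (I\otimes e_i e_i^T)\Big( \hat K_2^{-1} \big((W^TV)^{-1} W^T(e^{A \operatorname{Pr} \bar T}-e^{A \bar T}) B \otimes e^{D \bar T}\tilde B\big)-\big(\bar T(W^TV)^{-1} W^T(e^{A \operatorname{Pr}\bar T}-e^{A \bar T}) B \otimes e^{D \bar T}\tilde B\big)\Big) \operatorname{vec}(I),$$ $$E_{\lambda, 2}^i=\operatorname{vec}^T(I) (C e^{A \bar T} \otimes \tilde C e^{D \bar T})\left[(V\otimes I) \hat K_2^{-1} ((W^T V)^{-1}W^T \otimes I)- K_2^{-1}\right](I\otimes e_i e_i^T)\left[K_2^{-1} (e^{A \bar T} B \otimes e^{D \bar T}\tilde B - B \otimes \tilde B)-(\bar Te^{A \bar T} B \otimes e^{D \bar T}\tilde B)\right]\operatorname{vec}(I),$$ with $\hat K_2:=(I\otimes D)+(\hat A\otimes I)$ and $K_2:=(I\otimes D)+(A\otimes I)$.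
   Context: $e_i$ is the $i$-th column of an identity matrix, $I$ denotes identity matrices of suitable sizes, $\otimes$ is the Kronecker product, $\operatorname{vec}$ stacks the columns of a matrix into a vector and $\operatorname{vec}^T(I)=(\operatorname{vec}(I))^T$; transposes are plain transposes. The time-limited IRKA-type algorithm iterates: given $\hat A,\hat B,\hat C$, diagonalize $D=S\hat AS^{-1}$, set $\tilde B=S\hat B$, $\tilde C=\hat CS^{-1}$, solve the two Sylvester equations displayed in the claim for $V$ and $W$, orthogonalize $V,W$, and set $\hat A=(W^TV)^{-1}W^TAV$, $\hat B=(W^TV)^{-1}W^TB$, $\hat C=CV$. The quantities $L_c,R_c$, $L_b,R_b$, $L_\lambda^i,R_\lambda^i$ are the two sides of the Kronecker-form first-order necessary optimality conditions for the time-limited $\mathcal H_2$ model reduction problem. *)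

From HB Require Import structures.
From mathcomp Require Import all_boot all_order all_algebra.
From mathcomp Require Import all_classical all_reals all_analysis.
From mathcomp Require Import complex.

Set Implicit Arguments.
Unset Strict Implicit.
Unset Printing Implicit Defensive.

Import Order.TTheory GRing.Theory Num.Theory.
Import numFieldNormedType.Exports.
Local Open Scope ring_scope.

(* Index splitting 'I_(m * n) <-> 'I_m * 'I_n (lexicographic:         *)
(* k = i * n + j), the same pairing as MathComp's mxvec_index.         *)
Definition ix_pair (m n : nat) (k : 'I_(m * n)) : 'I_m * 'I_n :=
  enum_val (cast_ord (esym (mxvec_cast m n)) k).

Definition kron (T : pzRingType) (m1 n1 m2 n2 : nat)
    (A : 'M[T]_(m1, n1)) (B : 'M[T]_(m2, n2)) : 'M[T]_(m1 * m2, n1 * n2) :=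
  \matrix_(k, l) (A (ix_pair k).1 (ix_pair l).1 * B (ix_pair k).2 (ix_pair l).2).

(* vec: stacks the COLUMNS of X : 'M_(m, n) into a column vector of
   length n * m; index (j, i) (column j outer, row i inner) holds X i j.
   With this convention vec (A X B) = (B^T ⊗ A) vec X. *)
Definition vec (T : Type) (m n : nat) (X : 'M[T]_(m, n)) : 'cV[T]_(n * m) :=
  \col_k X (ix_pair k).2 (ix_pair k).1.

Definition expm_partial (R : realType) (n : nat) (M : 'M[R[i]]_n) (N : nat)
  : 'M[R[i]]_n :=
  \sum_(k < N) ((k`!)%:R^-1 *: iter k (mulmx M) 1%:M).

Definition expm (R : realType) (n : nat) (M : 'M[R[i]]_n) : 'M[R[i]]_n :=
  \matrix_(i, j)
    Complex (limn (fun N => complex.Re (expm_partial M N i j)))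
            (limn (fun N => complex.Im (expm_partial M N i j))).

Definition cmx (R : realType) (m n : nat) (A : 'M[R]_(m, n)) : 'M[R[i]]_(m, n) :=
  map_mx (fun x : R => (x%:C)%C) A.

Definition vecI (R : realType) (k : nat) : 'cV[R[i]]_(k * k) := vec (1%:M : 'M[R[i]]_k).

Definition eeT (R : realType) (r : nat) (i : 'I_r) : 'M[R[i]]_r := delta_mx i i.

Definition idm (R : realType) (k : nat) : 'M[R[i]]_k := 1%:M.

From HB Require Import structures.
From mathcomp Require Import all_boot all_order all_algebra.
From mathcomp Require Import all_classical all_reals all_analysis.
From mathcomp Require Import complex.
From mathcomp Require Import ring.

(* Everything follows from the two Sylvester equations by linear algebra.  With
   P := (W^T V)^-1 W^T one has P V = I, Â = P A V, B̂ = P B and Ĉ = C V, and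
   vec (N X M^T) = (M ⊗ N) vec X turns each Kronecker inverse applied to a
   right-hand side into the solution of a Sylvester equation.
   (a) R_c = vec (C V) = vec Ĉ.  Splitting e^{TÂ} B̂ = P e^{TA} B + P (e^{T A Pr} - e^{TA}) B
   (from e^{TÂ} P = P e^{T A Pr}), P times the equation for V becomes the
   Sylvester equation for Â with solution I, so L_c - E_c = vec Ĉ as well.
   (b) is the dual argument with W and e^{T Pr A} V = V e^{TÂ}: both R_b and
   L_b - E_b equal vec (W^T B).
   (c) By the equation for V, K̂_2^-1 (P ⊗ I) and (P ⊗ I) K_2^-1 agree on the vector
   at hand, which removes E^i_{λ,1}; by the equation for W, vec^T (W^T) K_2 is the
   difference of the two output weights, which yields E^i_{λ,2}.
   The matrix exponential only enters through e^X Q = Q e^Y when X Q = Q Y and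
   through (e^X)^T = e^{X^T}; both hold for the partial sums and pass to the limit
   since the series is dominated by exp of a row-sum norm. *)

Set Implicit Arguments.
Unset Strict Implicit.
Unset Printing Implicit Defensive.

Import Order.TTheory GRing.Theory Num.Theory.
Import numFieldNormedType.Exports.
Local Open Scope ring_scope.

Lemma subrACA (V : zmodType) (a b c d : V) : (a - b) - (c - d) = (a - c) - (b - d).
Proof. by rewrite !opprB [LHS]addrACA [RHS]addrACA [- b + _]addrC. Qed.

Section KroneckerVec.
Variable K : comPzRingType.

Lemma sum_ix_pair m n (F : 'I_m -> 'I_n -> K) :
  \sum_(k < m * n) F (ix_pair k).1 (ix_pair k).2 = \sum_(i < m) \sum_(j < n) F i j.
Proof.
pose f (u : 'I_m * 'I_n) := cast_ord (mxvec_cast m n) (enum_rank u).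
have fK : cancel f (@ix_pair m n) by move=> u; rewrite /ix_pair cast_ordK enum_rankK.
have ixK : cancel (@ix_pair m n) f by move=> k; rewrite /f /ix_pair enum_valK cast_ordKV.
rewrite pair_big /= (reindex f) /=; last by apply: onW_bij; exists (@ix_pair m n).
by apply: eq_bigr => u _; rewrite fK.
Qed.

Lemma mul_kron_vec a b c d (M : 'M[K]_(a, c)) (N : 'M[K]_(b, d)) (X : 'M[K]_(d, c)) :
  kron M N *m vec X = vec (N *m X *m M^T).
Proof.
apply/matrixP => k z; rewrite !mxE; under eq_bigr do rewrite !mxE.
rewrite (sum_ix_pair (fun u v => M _ u * N _ v * X v u)).
apply: eq_bigr => u _; rewrite !mxE mulr_suml; apply: eq_bigr => v _.
by ring.
Qed.

Lemma mul_kron a b c d e f (A : 'M[K]_(a, c)) (B : 'M[K]_(b, d))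
    (C : 'M[K]_(c, e)) (D : 'M[K]_(d, f)) :
  kron A B *m kron C D = kron (A *m C) (B *m D).
Proof.
apply/matrixP => k l; rewrite !mxE; under eq_bigr do rewrite !mxE.
rewrite (sum_ix_pair (fun u v => A _ u * B _ v * (C u _ * D v _))) big_distrl /=.
apply: eq_bigr => u _; rewrite big_distrr /=.
by apply: eq_bigr => v _; ring.
Qed.

Lemma trmx_kron a b c d (M : 'M[K]_(a, c)) (N : 'M[K]_(b, d)) :
  (kron M N)^T = kron M^T N^T.
Proof. by apply/matrixP => k l; rewrite !mxE. Qed.

Lemma kronBl a b c d (M M' : 'M[K]_(a, c)) (N : 'M[K]_(b, d)) :
  kron (M - M') N = kron M N - kron M' N.
Proof. by apply/matrixP => k l; rewrite !mxE mulrBl. Qed.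

Lemma vecD a b (X Y : 'M[K]_(a, b)) : vec (X + Y) = vec X + vec Y.
Proof. by apply/matrixP => k l; rewrite !mxE. Qed.

Lemma vecB a b (X Y : 'M[K]_(a, b)) : vec (X - Y) = vec X - vec Y.
Proof. by apply/matrixP => k l; rewrite !mxE. Qed.

Lemma kron_mul_vec1 a b c (M : 'M[K]_(a, c)) (N : 'M[K]_(b, c)) :
  kron M N *m vec 1%:M = vec (N *m M^T).
Proof. by rewrite mul_kron_vec mulmx1. Qed.

Lemma vec_mul_kron a b c d (M : 'M[K]_(a, c)) (N : 'M[K]_(b, d)) (X : 'M[K]_(b, a)) :
  (vec X)^T *m kron M N = (vec (N^T *m X *m M))^T.
Proof. by rewrite -[LHS]trmxK trmx_mul trmxK trmx_kron mul_kron_vec trmxK. Qed.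

Lemma sylvester_mul_vec a b (M : 'M[K]_a) (N : 'M[K]_b) (X : 'M[K]_(a, b)) :
  (kron 1%:M M + kron N 1%:M) *m vec X = vec (M *m X + X *m N^T).
Proof. by rewrite mulmxDl !mul_kron_vec trmx1 mulmx1 mul1mx vecD. Qed.

Lemma vec_mul_sylvester a b (M : 'M[K]_a) (N : 'M[K]_b) (X : 'M[K]_(a, b)) :
  (vec X)^T *m (kron 1%:M M + kron N 1%:M) = (vec (M^T *m X + X *m N))^T.
Proof. by rewrite mulmxDr !vec_mul_kron trmx1 mulmx1 mul1mx vecD raddfD. Qed.
End KroneckerVec.

Lemma sylvester_solve (K : comUnitRingType) a b (M : 'M[K]_a) (N : 'M[K]_b)
    (X Y : 'M[K]_(a, b)) :
  kron 1%:M M + kron N 1%:M \in unitmx -> M *m X + X *m N^T = Y ->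
  invmx (kron 1%:M M + kron N 1%:M) *m vec Y = vec X.
Proof. by move=> Ku <-; rewrite -sylvester_mul_vec mulKmx. Qed.

Section ComplexLimits.
Local Open Scope classical_set_scope.
Variable R : realType.
Implicit Types (z w : nat -> R[i]) (l c : R[i]).
(* Typed through [Rcomplex R], where [Re] and [Im] are declared linear; plain
   [Re] would be [Num.Theory.Re]. *)
Local Notation Re := (@complex.Re R : Rcomplex R -> R).
Local Notation Im := (@complex.Im R : Rcomplex R -> R).

Lemma ReM (x y : R[i]) : Re (x * y) = Re x * Re y - Im x * Im y.
Proof. by case: x => ? ?; case: y. Qed.
Lemma ImM (x y : R[i]) : Im (x * y) = Re x * Im y + Im x * Re y.
Proof. by case: x => ? ?; case: y. Qed.

Definition cplx_cvg z l :=
  (fun N => Re (z N)) @ \oo --> Re l /\ (fun N => Im (z N)) @ \oo --> Im l.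

Lemma cplx_cvg_unique z l l' : cplx_cvg z l -> cplx_cvg z l' -> l = l'.
Proof.
case: l l' => [a b] [a' b'] [/= za zb] [/= za' zb'].
by congr Complex; [exact: cvg_unique za za' | exact: cvg_unique zb zb'].
Qed.

Lemma cplx_cvgD z w l c : cplx_cvg z l -> cplx_cvg w c ->
  cplx_cvg (fun N => z N + w N) (l + c).
Proof.
move=> [zr zi] [wr wi]; split.
  by under eq_fun do rewrite raddfD; rewrite raddfD; apply: cvgD.
by under eq_fun do rewrite raddfD; rewrite raddfD; apply: cvgD.
Qed.

Lemma cplx_cvgMr z l c : cplx_cvg z l -> cplx_cvg (fun N => z N * c) (l * c).
Proof.
move=> [zr zi]; split.
  under eq_fun do rewrite ReM; rewrite ReM.
  by apply: cvgB; apply: cvgMr_tmp.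
under eq_fun do rewrite ImM; rewrite ImM.
by apply: cvgD; apply: cvgMr_tmp.
Qed.

Lemma cplx_cvg_sum (I : Type) (s : seq I) (z : I -> nat -> R[i]) (l : I -> R[i]) :
  (forall k, cplx_cvg (z k) (l k)) ->
  cplx_cvg (fun N => \sum_(k <- s) z k N) (\sum_(k <- s) l k).
Proof.
move=> zl; elim: s => [|a s IH].
  by under eq_fun do rewrite big_nil; rewrite big_nil; split; apply: cvg_cst.
by under eq_fun do rewrite big_cons; rewrite big_cons; apply: cplx_cvgD.
Qed.

Definition l1normc (x : R[i]) : R := `|Re x| + `|Im x|.

Lemma l1normc_ge0 x : 0 <= l1normc x.
Proof. by rewrite addr_ge0. Qed.

Lemma l1normc_sum (I : Type) (s : seq I) (F : I -> R[i]) :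
  l1normc (\sum_(k <- s) F k) <= \sum_(k <- s) l1normc (F k).
Proof.
elim/big_rec2: _ => [|k y x _ le_xy]; first by rewrite /l1normc /= normr0 addr0.
apply: le_trans (lerD (lexx _) le_xy); rewrite /l1normc !raddfD /= addrACA.
by apply: lerD; apply: ler_normD.
Qed.

Lemma l1normcM x y : l1normc (x * y) <= l1normc x * l1normc y.
Proof.
case: x y => [a b] [c d]; rewrite /l1normc /=.
apply: le_trans (lerD (ler_normB _ _) (ler_normD _ _)) _; rewrite !normrM.
have -> : (`|a| + `|b|) * (`|c| + `|d|)
  = `|a| * `|c| + `|b| * `|d| + (`|a| * `|d| + `|b| * `|c|) by ring.
by [].
Qed.

Definition rowsum_norm n (M : 'M[R[i]]_n) : R :=
  \big[Num.max/0]_i \sum_j l1normc (M i j).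

Lemma rowsum_norm_ge0 n (M : 'M[R[i]]_n) : 0 <= rowsum_norm M.
Proof. exact: bigmax_ge_id. Qed.

Lemma l1normc_iter_mulmx n (M : 'M[R[i]]_n) k i j :
  l1normc (iter k (mulmx M) 1%:M i j) <= rowsum_norm M ^+ k.
Proof.
elim: k i j => [|k IH] i j /=.
  by rewrite mxE; case: (i == j); rewrite /l1normc /= ?normr1 normr0 addr0.
rewrite mxE exprS; apply: le_trans (l1normc_sum _ _) _.
apply: (@le_trans _ _ (\sum_l l1normc (M i l) * rowsum_norm M ^+ k)).
  apply: ler_sum => l _; apply: le_trans (l1normcM _ _) _.
  by rewrite ler_wpM2l ?l1normc_ge0.
rewrite -mulr_suml ler_wpM2r ?exprn_ge0 ?rowsum_norm_ge0 //.
exact: (le_bigmax _ (fun i => \sum_j l1normc (M i j))).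
Qed.

Lemma cvg_expm_partial n (M : 'M[R[i]]_n) i j :
  cplx_cvg (fun N => expm_partial M N i j) (expm M i j).
Proof.
pose P k := iter k (mulmx M) 1%:M.
have partialE N : expm_partial M N i j = \sum_(k < N) ((k`!%:R)^-1)%:C%C * P k i j.
  by rewrite /expm_partial summxE; apply: eq_bigr => k _; rewrite mxE fmorphV rmorph_nat.
have dominated (u : nat -> R) : (forall k, `|u k| <= rowsum_norm M ^+ k) ->
    cvgn (series (fun k => (k`!%:R)^-1 * u k)).
  move=> u_le; apply: normed_cvg.
  apply: (@series_le_cvg _ _ (exp_coeff (rowsum_norm M))) => [k|k|k|] /=.
  - exact: normr_ge0.
  - exact/exp_coeff_ge0/rowsum_norm_ge0.
  - by rewrite normrM ger0_norm // mulrC ler_wpM2r.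
  - exact: is_cvg_series_exp_coeff.
have l1normc_iter k : l1normc (P k i j) <= rowsum_norm M ^+ k.
  exact: l1normc_iter_mulmx.
split; rewrite mxE /=.
- have -> : (fun N => Re (expm_partial M N i j)) = series (fun k => (k`!%:R)^-1 * Re (P k i j)).
    apply: funext => N; rewrite partialE raddf_sum /series /= big_mkord.
    by apply: eq_bigr => k _; rewrite ReM /= mul0r subr0.
  by apply: dominated => k; apply: le_trans (l1normc_iter k); rewrite lerDl.
- have -> : (fun N => Im (expm_partial M N i j)) = series (fun k => (k`!%:R)^-1 * Im (P k i j)).
    apply: funext => N; rewrite partialE raddf_sum /series /= big_mkord.
    by apply: eq_bigr => k _; rewrite ImM /= mul0r addr0.
  by apply: dominated => k; apply: le_trans (l1normc_iter k); rewrite lerDr.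
Qed.
End ComplexLimits.

Section MatrixExponential.
Local Open Scope classical_set_scope.
Variable R : realType.

Lemma cplx_cvg_mulmxr a b c (F : nat -> 'M[R[i]]_(a, b)) (L : 'M[R[i]]_(a, b))
    (Q : 'M[R[i]]_(b, c)) :
    (forall i j, cplx_cvg (fun N => F N i j) (L i j)) ->
  forall i j, cplx_cvg (fun N => (F N *m Q) i j) ((L *m Q) i j).
Proof.
move=> FL i j; rewrite mxE; under eq_fun do rewrite mxE.
by apply: cplx_cvg_sum => k; apply: cplx_cvgMr.
Qed.

Lemma cplx_cvg_mulmxl a b c (F : nat -> 'M[R[i]]_(b, c)) (L : 'M[R[i]]_(b, c))
    (Q : 'M[R[i]]_(a, b)) :
    (forall i j, cplx_cvg (fun N => F N i j) (L i j)) ->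
  forall i j, cplx_cvg (fun N => (Q *m F N) i j) ((Q *m L) i j).
Proof.
move=> FL i j; rewrite mxE; under eq_fun do rewrite mxE.
under eq_fun do under eq_bigr do rewrite mulrC; under eq_bigr do rewrite mulrC.
by apply: cplx_cvg_sum => k; apply: cplx_cvgMr.
Qed.

Lemma iter_mulmx_comm a b (X : 'M[R[i]]_a) (Y : 'M[R[i]]_b) (Q : 'M[R[i]]_(a, b)) k :
  X *m Q = Q *m Y -> iter k (mulmx X) 1%:M *m Q = Q *m iter k (mulmx Y) 1%:M.
Proof.
move=> XQ; elim: k => [|k IH] /=; first by rewrite mul1mx mulmx1.
by rewrite -mulmxA IH mulmxA XQ mulmxA.
Qed.

Lemma expm_mulmx_comm a b (X : 'M[R[i]]_a) (Y : 'M[R[i]]_b) (Q : 'M[R[i]]_(a, b)) :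
  X *m Q = Q *m Y -> expm X *m Q = Q *m expm Y.
Proof.
move=> XQ; have partialQ N : expm_partial X N *m Q = Q *m expm_partial Y N.
  rewrite /expm_partial mulmx_suml mulmx_sumr; apply: eq_bigr => k _.
  by rewrite -scalemxAl -scalemxAr (iter_mulmx_comm _ XQ).
apply/matrixP => i j.
apply: (cplx_cvg_unique (cplx_cvg_mulmxr Q (cvg_expm_partial X) i j)).
under eq_fun do rewrite partialQ.
exact: cplx_cvg_mulmxl (cvg_expm_partial Y) i j.
Qed.

Lemma trmx_iter_mulmx a (X : 'M[R[i]]_a) k :
  (iter k (mulmx X) 1%:M)^T = iter k (mulmx X^T) 1%:M.
Proof.
elim: k => [|k IH] /=; first by rewrite trmx1.
by rewrite trmx_mul IH; apply: iter_mulmx_comm.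
Qed.

Lemma trmx_expm a (X : 'M[R[i]]_a) : (expm X)^T = expm X^T.
Proof.
have partialT N : expm_partial X^T N = (expm_partial X N)^T.
  rewrite /expm_partial raddf_sum; apply: eq_bigr => k _.
  by rewrite -trmx_iter_mulmx; apply/matrixP => ? ?; rewrite !mxE.
apply/matrixP => i j; rewrite !mxE.
by congr Complex; congr (lim (_ @ \oo)); apply: funext => N; rewrite partialT mxE.
Qed.

Lemma expmZ_tr a (c : R[i]) (X : 'M[R[i]]_a) : expm (c *: X^T) = (expm (c *: X))^T.
Proof. by rewrite trmx_expm linearZ. Qed.
End MatrixExponential.

Section ReducedModel.
Variables (K : comUnitRingType) (n m p r : nat).
Variables (A : 'M[K]_n) (B : 'M[K]_(n, m)) (C : 'M[K]_(p, n)) (D : 'M[K]_r).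
Variables (V W : 'M[K]_(n, r)) (Bt : 'M[K]_(r, m)) (Ct : 'M[K]_(p, r)).
(* [E], [EAh], [EA], [EAP], [EPA] stand for e^{TD}, e^{TÂ}, e^{TA}, e^{T A Pr} and
   e^{T Pr A}; only the relations assumed below are used. *)
Variables (E EAh : 'M[K]_r) (EA EAP EPA : 'M[K]_n).

Local Notation P := (invmx (W^T *m V) *m W^T).
Local Notation Ah := (P *m A *m V).
Local Notation Bh := (P *m B).
Local Notation Ch := (C *m V).

Hypothesis WV_unit : W^T *m V \in unitmx.
Hypothesis D_sym : D^T = D.
Hypothesis E_sym : E^T = E.
Hypothesis sylvesterV :
  - (V *m D) - A *m V = B *m Bt^T - EA *m B *m Bt^T *m E.
Hypothesis sylvesterW :
  - (W *m D) - A^T *m W = C^T *m Ct - EA^T *m C^T *m Ct *m E.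
Hypothesis EAh_P : EAh *m P = P *m EAP.
Hypothesis EPA_V : EPA *m V = V *m EAh.

Lemma mulPV : P *m V = 1%:M.
Proof. by rewrite -mulmxA mulVmx. Qed.

Lemma mulWVP : W^T *m V *m P = W^T.
Proof. by rewrite mulmxA mulmxV // mul1mx. Qed.

Lemma mulWV_Ah : W^T *m V *m Ah = W^T *m A *m V.
Proof. by rewrite !mulmxA mulmxV // mul1mx. Qed.

Lemma sylvesterV_sum : A *m V + V *m D = EA *m B *m Bt^T *m E - B *m Bt^T.
Proof. by apply: oppr_inj; rewrite opprB opprD addrC. Qed.

Lemma sylvesterW_sum : D *m W^T + W^T *m A = E *m Ct^T *m C *m EA - Ct^T *m C.
Proof.
apply: oppr_inj; rewrite opprB opprD; have := congr1 trmx sylvesterW.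
by rewrite !raddfB raddfN /= !trmx_mul !trmxK D_sym E_sym -!mulmxA.
Qed.

Lemma reduced_exp_B : EAh *m Bh - P *m (EAP - EA) *m B = P *m EA *m B.
Proof.
by rewrite mulmxA EAh_P mulmxBr mulmxBl -!mulmxA subKr.
Qed.

Lemma Lc_sub_Rc :
    kron 1%:M Ah + kron D 1%:M \in unitmx -> kron 1%:M A + kron D 1%:M \in unitmx ->
  kron 1%:M Ch *m invmx (kron 1%:M Ah + kron D 1%:M)
    *m (kron (E *m Bt) (EAh *m Bh) - kron Bt Bh) *m vec (1%:M : 'M[K]_m)
  - kron 1%:M C *m invmx (kron 1%:M A + kron D 1%:M)
    *m (kron (E *m Bt) (EA *m B) - kron Bt B) *m vec (1%:M : 'M[K]_m)
  = kron 1%:M Ch *m invmx (kron 1%:M Ah + kron D 1%:M)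
    *m kron (E *m Bt) (P *m (EAP - EA) *m B) *m vec (1%:M : 'M[K]_m).
Proof.
move=> Kh_unit K_unit.
set iKh := invmx (kron 1%:M Ah + kron D 1%:M).
set Yh := _ - kron Bt Bh; set G := kron _ (P *m _ *m B).
have full : invmx (kron 1%:M A + kron D 1%:M)
    *m ((kron (E *m Bt) (EA *m B) - kron Bt B) *m vec 1%:M) = vec V.
  rewrite mulmxBl !kron_mul_vec1 -vecB; apply: sylvester_solve => //.
  by rewrite D_sym sylvesterV_sum trmx_mul E_sym !mulmxA.
have reduced : iKh *m ((Yh - G) *m vec 1%:M) = vec 1%:M.
  rewrite !mulmxBl !kron_mul_vec1 -!vecB; apply: sylvester_solve => //.
  rewrite mulmx1 mul1mx D_sym addrAC -mulmxBl reduced_exp_B.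
  have -> : Ah + D = P *m (A *m V + V *m D) by rewrite mulmxDr !mulmxA mulPV mul1mx.
  by rewrite sylvesterV_sum mulmxBr trmx_mul E_sym !mulmxA.
rewrite -!mulmxA full mul_kron_vec trmx1 mulmx1.
have <- : kron 1%:M Ch *m (iKh *m ((Yh - G) *m vec 1%:M)) = vec Ch.
  by rewrite reduced mul_kron_vec trmx1 !mulmx1.
by rewrite [(Yh - G) *m _]mulmxBl !mulmxBr subKr.
Qed.

Lemma reduced_exp_C : Ch *m EAh - C *m (EPA - EA) *m V = C *m EA *m V.
Proof. by rewrite -mulmxA -EPA_V mulmxBr mulmxBl !mulmxA subKr. Qed.

Lemma Lb_sub_Rb :
    kron 1%:M D + kron Ah^T 1%:M \in unitmx -> kron 1%:M D + kron A^T 1%:M \in unitmx ->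
  kron Bh^T 1%:M *m invmx (kron 1%:M D + kron Ah^T 1%:M)
    *m (kron (EAh^T *m Ch^T) (E *m Ct^T) - kron Ch^T Ct^T) *m vec (1%:M : 'M[K]_p)
  - kron B^T 1%:M *m invmx (kron 1%:M D + kron A^T 1%:M)
    *m (kron (EA^T *m C^T) (E *m Ct^T) - kron C^T Ct^T) *m vec (1%:M : 'M[K]_p)
  = kron Bh^T 1%:M *m invmx (kron 1%:M D + kron Ah^T 1%:M)
    *m kron (V^T *m (EPA^T - EA^T) *m C^T) (E *m Ct^T) *m vec (1%:M : 'M[K]_p).
Proof.
move=> Kh_unit K_unit.
set iKh := invmx (kron 1%:M D + kron Ah^T 1%:M).
set Yh := _ - kron Ch^T Ct^T; set kBh := kron Bh^T 1%:M; set G := kron (V^T *m _ *m C^T) _.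
have full : invmx (kron 1%:M D + kron A^T 1%:M)
    *m ((kron (EA^T *m C^T) (E *m Ct^T) - kron C^T Ct^T) *m vec 1%:M) = vec W^T.
  rewrite mulmxBl !kron_mul_vec1 -vecB; apply: sylvester_solve => //.
  by rewrite trmx_mul !trmxK sylvesterW_sum !mulmxA.
have reduced : iKh *m ((Yh - G) *m vec 1%:M) = vec (W^T *m V).
  rewrite !mulmxBl !kron_mul_vec1 -!vecB; apply: sylvester_solve => //.
  rewrite !trmx_mul raddfB /= !trmxK addrAC -mulmxBr [C *m (_ *m V)]mulmxA reduced_exp_C.
  have -> : D *m (W^T *m V) + W^T *m V *m Ah = (D *m W^T + W^T *m A) *m V.
    by rewrite mulmxDl mulWV_Ah mulmxA.
  by rewrite sylvesterW_sum mulmxBl !mulmxA.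
rewrite -!mulmxA full mul_kron_vec mul1mx trmxK.
have <- : kBh *m (iKh *m ((Yh - G) *m vec 1%:M)) = vec (W^T *m B).
  by rewrite reduced mul_kron_vec mul1mx trmxK !mulmxA mulmxV // mul1mx.
by rewrite [(Yh - G) *m _]mulmxBl !mulmxBr subKr.
Qed.

Variables (t : K) (Ek : 'M[K]_r).

Local Notation K2h := (kron 1%:M D + kron Ah 1%:M).
Local Notation K2 := (kron 1%:M D + kron A 1%:M).
Local Notation kP := (kron P (1%:M : 'M[K]_r)).
Local Notation kV := (kron V (1%:M : 'M[K]_r)).
Local Notation vecIp := (vec (1%:M : 'M[K]_p)).
Local Notation vecIm := (vec (1%:M : 'M[K]_m)).
(* The right factors of R^i_λ, L^i_λ and E^i_{λ,1}, with [t] for T and [Ek] for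
   e_i e_i^T, which may be any r x r matrix. *)
Local Notation Xfull := (invmx K2 *m (kron (EA *m B) (E *m Bt) - kron B Bt)
                         - kron (t *: (EA *m B)) (E *m Bt)).
Local Notation Xred := (invmx K2h *m (kron (EAh *m Bh) (E *m Bt) - kron Bh Bt)
                        - kron (t *: (EAh *m Bh)) (E *m Bt)).
Local Notation Xerr := (invmx K2h *m kron (P *m (EAP - EA) *m B) (E *m Bt)
                        - kron (t *: (P *m (EAP - EA) *m B)) (E *m Bt)).

Hypothesis K2h_unit : K2h \in unitmx.
Hypothesis K2_unit : K2 \in unitmx.

Lemma invmx_K2h_kronP :
  invmx K2h *m (kP *m ((kron (EA *m B) (E *m Bt) - kron B Bt) *m vecIm))
  = kP *m (invmx K2 *m ((kron (EA *m B) (E *m Bt) - kron B Bt) *m vecIm)).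
Proof.
have Yvec : (kron (EA *m B) (E *m Bt) - kron B Bt) *m vecIm = K2 *m vec V^T.
  rewrite sylvester_mul_vec mulmxBl !kron_mul_vec1 -vecB; congr vec.
  have := congr1 trmx sylvesterV_sum.
  by rewrite raddfD raddfB /= !trmx_mul !trmxK D_sym E_sym addrC !mulmxA.
have shift : kP *m (K2 *m vec V^T) = K2h *m (kP *m vec V^T).
  rewrite sylvester_mul_vec !mul_kron_vec !mul1mx sylvester_mul_vec mulmxDl.
  congr (vec (_ + _)); first by rewrite mulmxA.
  by rewrite -[V^T *m P^T]trmx_mul mulPV trmx1 mul1mx !trmx_mul !mulmxA.
by rewrite Yvec [invmx K2 *m _]mulKmx // shift mulKmx.
Qed.

Lemma kronP_mul (X : 'M[K]_(n, m)) (Y : 'M[K]_(r, m)) : kP *m kron X Y = kron (P *m X) Y.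
Proof. by rewrite mul_kron mul1mx. Qed.

Lemma Xred_sub_Xerr :
  (Xred - Xerr) *m vecIm = kP *m (Xfull *m vecIm).
Proof.
rewrite subrACA -mulmxBr -!kronBl -scalerBr reduced_exp_B addrAC -kronBl reduced_exp_B.
rewrite -!(mulmxA P EA B) scalemxAr -!kronP_mul -mulmxBr mulmxBl.
set iK2h := invmx K2h; rewrite -!mulmxA {}/iK2h invmx_K2h_kronP.
by rewrite [in RHS]mulmxBl [in RHS]mulmxBr -[in RHS]mulmxA.
Qed.

Lemma output_weight_difference :
  vecIp^T *m kron Ch Ct *m invmx K2h *m kP - vecIp^T *m kron C Ct *m invmx K2
  = vecIp^T *m kron (C *m EA) (Ct *m E) *m (kV *m invmx K2h *m kP - invmx K2).
Proof.
set a := vecIp^T *m kron C Ct; set b := vecIp^T *m kron (C *m EA) (Ct *m E).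
set w := (vec W^T)^T; set z := (vec (W^T *m V))^T.
have wK2 : w *m K2 = b - a.
  rewrite vec_mul_sylvester D_sym sylvesterW_sum /a /b !vec_mul_kron !mulmx1.
  by rewrite trmx_mul E_sym vecB raddfB !mulmxA.
have zK2h : z *m K2h = (b - a) *m kV.
  rewrite -wK2 vec_mul_sylvester vec_mul_sylvester vec_mul_kron trmx1 mul1mx.
  by rewrite D_sym mulmxDl mulWV_Ah !mulmxA.
have zkP : z *m kP = w by rewrite vec_mul_kron trmx1 mul1mx mulWVP.
have aK2 : a *m invmx K2 = b *m invmx K2 - w.
  by rewrite -[w](mulmxK K2_unit) wK2 mulmxBl subKr.
have aK2h : a *m kV *m invmx K2h *m kP = b *m kV *m invmx K2h *m kP - w.
  by rewrite -zkP -[z](mulmxK K2h_unit) zK2h !mulmxBl subKr.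
have -> : kron Ch Ct = kron C Ct *m kV by rewrite mul_kron mulmx1.
rewrite !mulmxA -/a aK2h aK2.
by rewrite mulmxBr !mulmxA opprB subrKA.
Qed.

Lemma Llambda_sub_Rlambda :
  vecIp^T *m kron Ch Ct *m invmx K2h *m kron 1%:M Ek *m Xred *m vecIm
  - vecIp^T *m kron C Ct *m invmx K2 *m kron 1%:M Ek *m Xfull *m vecIm
  = vecIp^T *m kron Ch Ct *m invmx K2h *m kron 1%:M Ek *m Xerr *m vecIm
    + vecIp^T *m kron (C *m EA) (Ct *m E) *m (kV *m invmx K2h *m kP - invmx K2)
      *m kron 1%:M Ek *m Xfull *m vecIm.
Proof.
have kEk_kP : kron 1%:M Ek *m kP = kP *m kron 1%:M Ek.
  by rewrite !mul_kron !mul1mx !mulmx1.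
rewrite -output_weight_difference !mulmxBl.
set M := vecIp^T *m kron Ch Ct *m invmx K2h.
have <- : M *m kron 1%:M Ek *m Xred *m vecIm - M *m kron 1%:M Ek *m Xerr *m vecIm
          = M *m kP *m kron 1%:M Ek *m Xfull *m vecIm.
  rewrite -mulmxBl -mulmxBr -mulmxA Xred_sub_Xerr mulmxA.
  by rewrite -[_ *m kron 1%:M Ek *m kP]mulmxA kEk_kP !mulmxA.
by rewrite [RHS]addrC [RHS]addrAC subrK.
Qed.

End ReducedModel.

Theorem theorem3p3 (R : realType) (n m p r : nat)
  (A : 'M[R]_n) (B : 'M[R]_(n, m)) (C : 'M[R]_(p, n)) (T : R)
  (Ah : 'M[R[i]]_r) (Bh : 'M[R[i]]_(r, m)) (Ch : 'M[R[i]]_(p, r))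
  (lam : 'rV[R[i]]_r) (S : 'M[R[i]]_r)
  (Bt : 'M[R[i]]_(r, m)) (Ct : 'M[R[i]]_(p, r))
  (V W : 'M[R[i]]_(n, r)) :
  let Tc : R[i] := (T%:C)%C in
  let Ac := cmx A in let Bc := cmx B in let Cc := cmx C in
  let D := diag_mx lam in
  let WVi := invmx (W^T *m V) in
  let Pr := V *m WVi *m W^T in
  let K2h := kron (idm R r) D + kron Ah (idm R r) in
  let K2 := kron (idm R n) D + kron Ac (idm R r) in
  0 < T ->
  S \in unitmx ->
  Ah = invmx S *m D *m S ->
  Bt = S *m Bh ->
  Ct = Ch *m invmx S ->
  W^T *m V \in unitmx ->
  - (V *m D) - Ac *m V
    = Bc *m Bt^T - expm (Tc *: Ac) *m Bc *m Bt^T *m expm (Tc *: D) ->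
  - (W *m D) - Ac^T *m W
    = Cc^T *m Ct - expm (Tc *: Ac^T) *m Cc^T *m Ct *m expm (Tc *: D) ->
  Ah = WVi *m W^T *m Ac *m V ->
  Bh = WVi *m W^T *m Bc ->
  Ch = Cc *m V ->
  (* all matrix inverses appearing below exist *)
  kron (idm R r) Ah + kron D (idm R r) \in unitmx ->
  kron (idm R r) Ac + kron D (idm R n) \in unitmx ->
  kron (idm R r) D + kron Ah^T (idm R r) \in unitmx ->
  kron (idm R n) D + kron Ac^T (idm R r) \in unitmx ->
  K2h \in unitmx ->
  K2 \in unitmx ->
  (* (a) *)
  (let Lc := kron (idm R r) Ch
             *m invmx (kron (idm R r) Ah + kron D (idm R r))
             *m (kron (expm (Tc *: D) *m Bt) (expm (Tc *: Ah) *m Bh)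
                 - kron Bt Bh) *m vecI R m in
   let Rc := kron (idm R r) Cc
             *m invmx (kron (idm R r) Ac + kron D (idm R n))
             *m (kron (expm (Tc *: D) *m Bt) (expm (Tc *: Ac) *m Bc)
                 - kron Bt Bc) *m vecI R m in
   let Ec := kron (idm R r) Ch
             *m invmx (kron (idm R r) Ah + kron D (idm R r))
             *m kron (expm (Tc *: D) *m Bt)
                     (WVi *m W^T *m (expm (Tc *: (Ac *m Pr)) - expm (Tc *: Ac))
                          *m Bc)
             *m vecI R m in
   Lc - Rc = Ec)
  /\
  (* (b) *)
  (let Lb := kron Bh^T (idm R r)
             *m invmx (kron (idm R r) D + kron Ah^T (idm R r))
             *m (kron (expm (Tc *: Ah^T) *m Ch^T) (expm (Tc *: D) *m Ct^T)
                 - kron Ch^T Ct^T) *m vecI R p in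
   let Rb := kron Bc^T (idm R r)
             *m invmx (kron (idm R n) D + kron Ac^T (idm R r))
             *m (kron (expm (Tc *: Ac^T) *m Cc^T) (expm (Tc *: D) *m Ct^T)
                 - kron Cc^T Ct^T) *m vecI R p in
   let Eb := kron Bh^T (idm R r)
             *m invmx (kron (idm R r) D + kron Ah^T (idm R r))
             *m kron (V^T *m (expm (Tc *: (Ac^T *m Pr^T)) - expm (Tc *: Ac^T))
                          *m Cc^T)
                     (expm (Tc *: D) *m Ct^T)
             *m vecI R p in
   Lb - Rb = Eb)
  /\
  (* (c) *)
  (forall k : 'I_r,
   let Ll := (vecI R p)^T *m kron Ch Ct *m invmx K2h
             *m kron (idm R r) (eeT R k)
             *m (invmx K2h *m (kron (expm (Tc *: Ah) *m Bh) (expm (Tc *: D) *m Bt)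
                              - kron Bh Bt)
                 - kron (Tc *: (expm (Tc *: Ah) *m Bh)) (expm (Tc *: D) *m Bt))
             *m vecI R m in
   let Rl := (vecI R p)^T *m kron Cc Ct *m invmx K2
             *m kron (idm R n) (eeT R k)
             *m (invmx K2 *m (kron (expm (Tc *: Ac) *m Bc) (expm (Tc *: D) *m Bt)
                             - kron Bc Bt)
                 - kron (Tc *: (expm (Tc *: Ac) *m Bc)) (expm (Tc *: D) *m Bt))
             *m vecI R m in
   let El1 := (vecI R p)^T *m kron Ch Ct *m invmx K2h
             *m kron (idm R r) (eeT R k)
             *m (invmx K2h *m kron (WVi *m W^T *m
                                     (expm (Tc *: (Ac *m Pr)) - expm (Tc *: Ac)) *m Bc)
                                   (expm (Tc *: D) *m Bt)
                 - kron (Tc *: (WVi *m W^T *m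
                                 (expm (Tc *: (Ac *m Pr)) - expm (Tc *: Ac)) *m Bc))
                        (expm (Tc *: D) *m Bt))
             *m vecI R m in
   let El2 := (vecI R p)^T *m kron (Cc *m expm (Tc *: Ac)) (Ct *m expm (Tc *: D))
             *m (kron V (idm R r) *m invmx K2h *m kron (WVi *m W^T) (idm R r)
                 - invmx K2)
             *m kron (idm R n) (eeT R k)
             *m (invmx K2 *m (kron (expm (Tc *: Ac) *m Bc) (expm (Tc *: D) *m Bt)
                             - kron Bc Bt)
                 - kron (Tc *: (expm (Tc *: Ac) *m Bc)) (expm (Tc *: D) *m Bt))
             *m vecI R m in
   Ll - Rl = El1 + El2).
Proof.
move=> Tc Ac Bc Cc D WVi Pr K2h K2 _ _ _ _ _ WV_unit HV HW HAh HBh HCh U1 U2 U3 U4 U5 U6.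
subst Ah Bh Ch.
have D_sym : D^T = D := tr_diag_mx lam.
have E_sym : (expm (Tc *: D))^T = expm (Tc *: D) by rewrite -expmZ_tr D_sym.
have EAh_P : expm (Tc *: (WVi *m W^T *m Ac *m V)) *m (WVi *m W^T)
    = WVi *m W^T *m expm (Tc *: (Ac *m Pr)).
  by apply: expm_mulmx_comm; rewrite -scalemxAl -scalemxAr /Pr !mulmxA.
have EPA_V : expm (Tc *: (Pr *m Ac)) *m V = V *m expm (Tc *: (WVi *m W^T *m Ac *m V)).
  by apply: expm_mulmx_comm; rewrite -scalemxAl -scalemxAr /Pr !mulmxA.
rewrite -[Ac^T *m Pr^T]trmx_mul !expmZ_tr in HW *.
split; [|split].
- exact: (Lc_sub_Rc Cc WV_unit D_sym E_sym HV EAh_P U1 U2).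
- exact: (Lb_sub_Rb Bc WV_unit D_sym E_sym HW EPA_V U3 U4).
- by move=> k; exact: (Llambda_sub_Rlambda WV_unit D_sym E_sym HV HW EAh_P Tc (eeT R k) U5 U6).
Qed.
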